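(* Let $\mathcal{G}=(N,\mathcal{W})$ be an SVG, let $i\neq j$ be players with $j$ a YES-blocker of $\mathcal{G}$, and let $\hat{\mathcal{G}}=\mathcal{G}^{j\to i}$. Let $S\subseteq N\setminus\{i,j\}$ satisfy $S\cup\{i,j\}\notin\mathcal{W}$. Then $$\hat\alpha^-_i(S\cup\{j\})\le \alpha^-_i(S\cup\{j\})+\alpha^-_j(S\cup\{i\}),$$ where $\alpha^-$ denotes NO-efficacy scores of the Recursive Measure in $\mathcal{G}$, and $\hat\alpha^-$ denotes the same in $\hat{\mathcal{G}}$.
   Context: A simple voting game (SVG) is a pair $\mathcal{G}=(N,\mathcal{W})$ with $N$ a nonempty finite set of players and $\mathcal{W}\subseteq 2^N$ monotone, $\emptyset\notin\mathcal{W}$, $N\in\mathcal{W}$. Divisions are identified with their YES-sets $S\subseteq N$; $S$ is winning iff $S\in\mathcal{W}$. Decisiveness and success: - Player $k$ is YES-decisive in $S$ if $k\in S\in\mathcal{W}$ and $S\setminus\{k\}\notin\mathcal{W}$. - Player $k$ is NO-decisive in $S$ if $k\notin S\notin\mathcal{W}$ and $S\cup\{k\}\in\mathcal{W}$. - Player $k$ is successful in $S$ if ($k\in S\in\mathcal{W}$) or ($k\notin S\notin\mathcal{W}$). Loyal children: if $S\in\mathcal{W}$, they are the sets $S\setminus\{m\}\in\mathcal{W}$ with $m\in S$. If $S\notin\mathcal{W}$, they are the sets $S\cup\{m\}\notin\mathcal{W}$ with $m\notin S$. Recursive efficacy score $\alpha_k(S)$: - $\alpha_k(S)=1$ if $k$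 is YES- or NO-decisive in $S$; - $\alpha_k(S)=0$ if $k$ is not successful; - otherwise, the average of $\alpha_k$ over the loyal children of $S$. The NO-efficacy score is $\alpha^-_k(S)=\alpha_k(S)$ if $k\notin S$ and $0$ if $k\in S$. Blockers: $j$ is a YES-blocker if $j\in S$ for all $S\in\mathcal{W}$. Donation game: $\mathcal{G}^{j\to i}$ is the SVG on $N$ in which, for $S\subseteq N\setminus\{i,j\}$: - $S\cup\{i,j\}$ and $S\cup\{i\}$ are winning iff $S\cup\{i,j\}\in\mathcal{W}$; - $S\cup\{j\}$ and $S$ are winning iff $S\in\mathcal{W}$. *)

From mathcomp Require Import all_boot all_order all_algebra.
Set Implicit Arguments. Unset Strict Implicit. Unset Printing Implicit Defensive.
Import Order.TTheory GRing.Theory Num.Theory.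
Local Open Scope ring_scope.

Section SVG.
Variable N : finType.

(* A simple voting game: winning predicate W on divisions (YES-sets). *)
Definition is_svg (W : {set N} -> bool) : Prop :=
  [/\ (forall S T : {set N}, S \subset T -> W S -> W T), ~~ W set0 & W setT].

Definition yes_decisive (W : {set N} -> bool) (k : N) (S : {set N}) : bool :=
  [&& k \in S, W S & ~~ W (S :\ k)].
Definition no_decisive (W : {set N} -> bool) (k : N) (S : {set N}) : bool :=
  [&& k \notin S, ~~ W S & W (k |: S)].
Definition successful (W : {set N} -> bool) (k : N) (S : {set N}) : bool :=
  ((k \in S) && W S) || ((k \notin S) && ~~ W S).

Definition loyal_children (W : {set N} -> bool) (S : {set N}) : {set {set N}} :=
  if W S then [set S :\ m | m in [set m in S | W (S :\ m)]]
  else [set m |: S | m in [set m in ~: S | ~~ W (m |: S)]].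

(* Fuel-based unfolding of the recursive definition; fuel #|N|.+1 is never
   exhausted (winning children lose one element, losing children gain one). *)
Fixpoint alpha_aux (W : {set N} -> bool) (n : nat) (k : N) (S : {set N}) : rat :=
  match n with
  | 0 => 0
  | n'.+1 =>
      if yes_decisive W k S || no_decisive W k S then 1
      else if ~~ successful W k S then 0
      else (\sum_(T in loyal_children W S) alpha_aux W n' k T)
             / (#|loyal_children W S|)%:R
  end.

Definition alpha (W : {set N} -> bool) (k : N) (S : {set N}) : rat :=
  alpha_aux W #|N|.+1 k S.

Definition alpha_minus (W : {set N} -> bool) (k : N) (S : {set N}) : rat :=
  if k \in S then 0 else alpha W k S.

Definition yes_blocker (W : {set N} -> bool) (j : N) : Prop :=
  forall S : {set N}, W S -> j \in S.

Definition donate (W : {set N} -> bool) (j i : N) (S : {set N}) : bool :=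
  let S0 := S :\ i :\ j in
  if i \in S then W (S0 :|: [set i; j]) else W S0.

End SVG.

(* In the donation game every division without i is losing (j, a YES-blocker of
   the original game, has given its power away), while a division containing i
   wins exactly when the same division with j added wins in the original game.
   So the recursion for i from S ∪ {j} in the donation game and the recursion for
   j from S ∪ {i} in the original game walk through the same chains of losing
   divisions U ∪ {j}, resp. U ∪ {i}, and meet the same NO-decisive events at
   U ∪ {i, j}.  Hence the donation-game score of i equals the original score of
   j, and the inequality holds because NO-efficacy scores are nonnegative. *)

From mathcomp Require Import all_boot all_order all_algebra.
Import Order.TTheory GRing.Theory Num.Theory.
Local Open Scope ring_scope.
Set Implicit Arguments. Unset Strict Implicit.

Section RecursiveMeasure.
Variable N : finType.
Implicit Types (W : {set N} -> bool) (k m : N) (B T U : {set N}).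

Lemma alpha_aux_ge0 W n k T : 0 <= alpha_aux W n k T.
Proof.
elim: n T => //= n IH T; case: ifP => // _; case: ifP => // _.
by rewrite divr_ge0 // sumr_ge0.
Qed.

Lemma alpha_minus_notin W k T : k \notin T -> alpha_minus W k T = alpha W k T.
Proof. by rewrite /alpha_minus => /negbTE ->. Qed.

Lemma alpha_aux_mem_losing W n k T : k \in T -> ~~ W T -> alpha_aux W n k T = 0.
Proof.
case: n => //= n kT /negbTE WT.
by rewrite /yes_decisive /no_decisive /successful kT WT.
Qed.

Lemma loyal_children_losing W T :
  ~~ W T -> (forall m, m \notin T -> ~~ W (m |: T)) ->
  loyal_children W T = [set m |: T | m in ~: T].
Proof.
rewrite /loyal_children => /negbTE -> extT.
rewrite (_ : [set m in ~: T | ~~ W (m |: T)] = ~: T) //; apply/setP => m.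
by rewrite !inE; case: (boolP (m \in T)) => //= /extT ->.
Qed.

Lemma setU1_injective_out T : {in ~: T &, injective (fun m => m |: T)}.
Proof.
move=> m m'; rewrite !inE => mT _ /= eqT.
by move: (setU11 m T); rewrite eqT !inE (negbTE mT) orbF => /eqP.
Qed.

Section LosingChain.
Variables (W : {set N} -> bool) (k : N) (B : {set N}).
Hypothesis kB : k \notin B.
Hypothesis B_losing : forall U, U \subset ~: (k |: B) -> ~~ W (B :|: U).

(* Along the chain B ∪ U, player k is NO-decisive or its score averages over the
   one-player extensions other than k; the extension by k itself scores 0. *)
Lemma alpha_aux_losing_chain n U : U \subset ~: (k |: B) ->
  alpha_aux W n.+1 k (B :|: U) =
    if W (k |: B :|: U) then 1
    else (\sum_(m in ~: (k |: B :|: U)) alpha_aux W n k (B :|: (m |: U)))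
           / (#|~: (k |: B :|: U)|.+1)%:R.
Proof.
move=> UkB; set T := B :|: U.
have kU : k \notin U by apply/negP => /(subsetP UkB); rewrite !inE eqxx.
have kT : k \notin T by rewrite !inE negb_or kB kU.
have extU m : m \notin k |: T -> m |: U \subset ~: (k |: B).
  rewrite !inE !negb_or => /and3P[mk mB _]; apply/subsetP => x.
  by rewrite !inE => /orP[/eqP-> | /(subsetP UkB)]; rewrite ?inE ?negb_or ?mk.
rewrite /= /yes_decisive /no_decisive /successful (negbTE kT) B_losing //=.
rewrite -setUA; case: ifPn => // kTlosing.
rewrite loyal_children_losing ?B_losing //; last first.
  move=> m mT; case: (m =P k) => [-> // | /eqP mk].
  by rewrite /T setUCA B_losing // extU // in_setU1 negb_or mk.
rewrite big_imset /=; last exact: setU1_injective_out.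
rewrite card_in_imset; last exact: setU1_injective_out.
have kCT : k \in ~: T by rewrite inE.
have CTk : ~: T :\ k = ~: (k |: T) by rewrite setDE -setCU setUC.
rewrite (big_setD1 k kCT) (cardsD1 k (~: T)) kCT CTk.
rewrite /= alpha_aux_mem_losing ?setU11 // add0r /T.
by congr (_ / _); apply: eq_bigr => m _; rewrite setUCA.
Qed.

End LosingChain.

(* By alpha_aux_losing_chain, along such chains the score depends only on which
   supersets of k1 |: B1 win, and on those the two games agree. *)
Lemma alpha_aux_transfer W1 W2 k1 k2 B1 B2 n U :
  k1 \notin B1 -> k2 \notin B2 -> k2 |: B2 = k1 |: B1 ->
  (forall U, U \subset ~: (k1 |: B1) -> ~~ W1 (B1 :|: U)) ->
  (forall U, U \subset ~: (k1 |: B1) -> ~~ W2 (B2 :|: U)) ->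
  (forall U, U \subset ~: (k1 |: B1) -> W1 (k1 |: B1 :|: U) = W2 (k1 |: B1 :|: U)) ->
  U \subset ~: (k1 |: B1) ->
  alpha_aux W1 n k1 (B1 :|: U) = alpha_aux W2 n k2 (B2 :|: U).
Proof.
move=> k1B1 k2B2 samePair losing1 losing2 agree.
have losing2' (V : {set N}) : V \subset ~: (k2 |: B2) -> ~~ W2 (B2 :|: V).
  by rewrite samePair; apply: losing2.
elim: n U => // n IH U UP.
rewrite (alpha_aux_losing_chain k1B1 losing1 _ UP).
rewrite (alpha_aux_losing_chain k2B2 losing2') ?samePair // agree //.
case: ifP => // _; congr (_ / _); apply: eq_bigr => m.
rewrite !inE negb_or => /andP[mP mU]; apply: IH; apply/subsetP => x.
by rewrite !inE => /orP[/eqP-> | /(subsetP UP)] //; rewrite !inE.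
Qed.

Lemma donate_notin W j i T : yes_blocker W j -> i \notin T -> ~~ donate W j i T.
Proof.
move=> blocker iT; rewrite /donate (negbTE iT); apply/negP => /blocker.
by rewrite !inE eqxx.
Qed.

Lemma donate_in W j i T : i \in T -> donate W j i T = W (j |: T).
Proof.
move=> iT; rewrite /donate iT; congr W; apply/setP => x; rewrite !inE.
by case: (x =P i) => [-> | _]; rewrite ?iT /= ?orbT //; case: (x == j); case: (x \in T).
Qed.

End RecursiveMeasure.

Theorem claim2 (N : finType) (W : {set N} -> bool) (i j : N) (S : {set N}) :
  is_svg W -> i != j -> yes_blocker W j ->
  S \subset ~: [set i; j] -> ~~ W (S :|: [set i; j]) ->
  alpha_minus (donate W j i) i (j |: S)
    <= alpha_minus W i (j |: S) + alpha_minus W j (i |: S).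
Proof.
move=> _ ij blocker Sij _.
have ji : j != i by rewrite eq_sym.
have outside (U : {set N}) x : U \subset ~: [set i; j] -> x \in [set i; j] -> x \notin U.
  by move=> Uij xij; apply/negP => /(subsetP Uij); rewrite inE xij.
have iij : i \in [set i; j] by rewrite !inE eqxx.
have jij : j \in [set i; j] by rewrite !inE eqxx orbT.
have donation_alpha : alpha (donate W j i) i (j |: S) = alpha W j (i |: S).
  apply: alpha_aux_transfer Sij; rewrite ?inE //.
  - by rewrite setUC.
  - move=> U Uij; apply: donate_notin => //.
    by rewrite !inE (negbTE ij) outside.
  - move=> U Uij; apply/negP => /blocker.
    by rewrite !inE (negbTE ji) (negbTE (outside _ _ Uij jij)).
  - move=> U _; rewrite donate_in; last by rewrite !inE eqxx.
    by congr W; apply/setUidPr; rewrite sub1set !inE eqxx orbT.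
have i_jS : i \notin j |: S by rewrite in_setU1 negb_or ij outside.
have j_iS : j \notin i |: S by rewrite in_setU1 negb_or ji outside.
by rewrite !alpha_minus_notin // donation_alpha lerDr; apply: alpha_aux_ge0.
Qed.
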